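(* Let $\nu$ be a modulus of variation, $1\le p<\infty$, and $\varepsilon_p(k)=(\nu(k)^p-\nu(k-1)^p)^{1/p}$ for $k\ge1$. Then: (i) $\{\nu(k)/k^{1/p}\}$ is nonincreasing if and only if $\{\nu(k)^p\}$ is quasiconcave, if and only if $\varepsilon_p(k)\le\nu(k)/k^{1/p}$ for all $k$; (ii) $\{\varepsilon_p(k)\}$ is nonincreasing if and only if $\{\nu(k)^p\}$ is concave; in this case, if $\nu(k)/k^{1/p}\to0$ then $\{\nu(k)/k^{1/p}\}$ is strictly decreasing from some index on; (iii) there is a constant $C$ such that $\nu(k)-\nu(k-1)\le C\,\varepsilon_p(k)\,k^{1/p-1}$ for all $k\ge1$.
   Context: A modulus of variation is a nondecreasing concave sequence of positive numbers $\nu(1),\nu(2),\dots$ (concave meaning $a_{k+1}+a_{k-1}\le2a_k$ for all $k$), with the convention $\nu(0)=0$. A sequence $\{a_k\}$ of positive numbers is quasiconcave if $\{a_k\}$ is nondecreasing and $\{a_k/k\}$ is nonincreasing. *)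

From HB Require Import structures.
From mathcomp Require Import all_boot all_order all_algebra.
From mathcomp Require Import all_classical all_reals all_analysis.
Set Implicit Arguments. Unset Strict Implicit. Unset Printing Implicit Defensive.
Import Order.TTheory GRing.Theory Num.Theory.
Local Open Scope ring_scope.

Section Defs.
Variable R : realType.

Definition concave_seq (a : nat -> R) : Prop :=
  forall k : nat, (0 < k)%N -> a k.+1 + a k.-1 <= 2 * a k.

Definition nonincr_seq (a : nat -> R) : Prop :=
  forall k : nat, (0 < k)%N -> a k.+1 <= a k.

Definition modulus_of_variation (nu : nat -> R) : Prop :=
  [/\ nu 0%N = 0,
      (forall k : nat, (0 < k)%N -> 0 < nu k),
      (forall k : nat, (0 < k)%N -> nu k <= nu k.+1) &
      concave_seq nu].

Definition quasiconcave (a : nat -> R) : Prop :=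
  [/\ (forall k : nat, (0 < k)%N -> 0 < a k),
      (forall k : nat, (0 < k)%N -> a k <= a k.+1) &
      (forall k : nat, (0 < k)%N -> a k.+1 / k.+1%:R <= a k / k%:R)].

Definition eps_p (p : R) (nu : nat -> R) (k : nat) : R :=
  (nu k `^ p - nu k.-1 `^ p) `^ p^-1.

Definition nu_norm (p : R) (nu : nat -> R) (k : nat) : R :=
  nu k / (k%:R `^ p^-1).

End Defs.

(* Since x |-> x ^ p is an increasing bijection of [0, +oo), everything is a
   statement about a k := nu k ^ p: nu_norm ^ p is the ratio a k / k and
   eps_p ^ p is the increment a k - a (k - 1).  Then (i) is the elementary
   equivalence a (k+1) / (k+1) <= a k / k <-> a (k+1) - a k <= a (k+1) / (k+1),
   and the first half of (ii) is the definition of concavity.  For a concave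
   with a 0 = 0 the ratios a k / k are nonincreasing, and two equal consecutive
   ratios force a to be linear up to there, so the later ratio equals
   a 1 = nu 1 ^ p; once nu_norm < nu 1 this is impossible.  For (iii), with
   C = 1, concavity of nu gives k (nu k - nu (k-1)) <= nu k, and
   nu k ^ p - nu (k-1) ^ p >= nu k ^ (p-1) (nu k - nu (k-1)). *)

From HB Require Import structures.
From mathcomp Require Import all_boot all_order all_algebra.
From mathcomp Require Import all_classical all_reals all_analysis.
From mathcomp Require Import ring lra.
Set Implicit Arguments. Unset Strict Implicit.
Import Order.TTheory GRing.Theory Num.Theory numFieldNormedType.Exports.
Local Open Scope classical_set_scope.
Local Open Scope ring_scope.

Section PowR.
Variable R : realType.

Lemma ler_powR2r (r : R) :
  0 < r -> {in Num.nneg &, {mono (@powR R) ^~ r : x y / x <= y}}.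
Proof. by move=> r0; apply: le_mono_in; exact: gt0_ltr_powR. Qed.

Lemma ltr_powR2r (r : R) :
  0 < r -> {in Num.nneg &, {mono (@powR R) ^~ r : x y / x < y}}.
Proof. by move=> r0; apply: leW_mono_in; exact: ler_powR2r. Qed.

Lemma powRVK (r x : R) : 0 < r -> 0 <= x -> (x `^ r^-1) `^ r = x.
Proof. by move=> r0 x0; rewrite -powRrM mulVf ?gt_eqF // powRr1. Qed.

Lemma powR_subr_ge (r x y : R) : 1 <= r -> 0 <= y <= x ->
  x `^ (r - 1) * (x - y) <= x `^ r - y `^ r.
Proof.
move=> r1 /andP[y0 yx]; have r0 : 0 < r by apply: lt_le_trans r1.
rewrite -(mulr_powRB1 (le_trans y0 yx) r0) -(mulr_powRB1 y0 r0).
have : y `^ (r - 1) <= x `^ (r - 1).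
  by apply: ge0_ler_powR; rewrite ?subr_ge0 ?nnegrE // (le_trans y0 yx).
nra.
Qed.

Lemma nonincr_seq_powR (r : R) (f g : nat -> R) : 0 < r ->
  (forall k, (0 < k)%N -> 0 <= f k) -> (forall k, (0 < k)%N -> f k `^ r = g k) ->
  nonincr_seq f <-> nonincr_seq g.
Proof.
move=> r0 f0 fg.
have fgE k : (0 < k)%N -> (f k.+1 <= f k) = (g k.+1 <= g k).
  by move=> k0; rewrite -(ler_powR2r r0) ?nnegrE ?f0 // !fg.
by split=> h k k0; [rewrite -fgE | rewrite fgE] => //; exact: h.
Qed.

End PowR.

Section ConcaveSeq.
Variable R : realType.
Implicit Types a : nat -> R.

Lemma ler_ratio_succ (u v : R) k : (0 < k)%N ->
  (v / k.+1%:R <= u / k%:R) = (v - u <= v / k.+1%:R).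
Proof.
move=> k0; rewrite ler_pdivlMr ?ltr0n //.
rewrite -[v in v - u](@divfK _ k.+1%:R) ?pnatr_eq0 // -natr1.
by apply/idP/idP => h; lra.
Qed.

Lemma quasiconcaveE a : (forall k, (0 < k)%N -> 0 < a k) ->
  (forall k, (0 < k)%N -> a k <= a k.+1) ->
  quasiconcave a <-> nonincr_seq (fun k => a k / k%:R).
Proof. by move=> a_gt0 a_nondecr; split=> [[]|]. Qed.

Lemma concave_seq_nonincr_diff a :
  concave_seq a <-> nonincr_seq (fun k => a k - a k.-1).
Proof. by split=> h k k0; have := h k k0; case: k k0 => // k _ /=; lra. Qed.

Variable a : nat -> R.
Hypotheses (a0 : a 0%N = 0) (ca : concave_seq a).

Lemma concave0_incr_le k : k%:R * (a k.+1 - a k) <= a k.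
Proof.
elim: k => [|k IH]; first by rewrite mul0r a0.
have := ca (ltn0Sn k); rewrite /= -natr1.
have : 0 <= k%:R :> R by [].
nra.
Qed.

Lemma concave0_linear k :
  a k <= k%:R * (a k.+1 - a k) -> a k.+1 = k.+1%:R * a 1%N.
Proof.
elim: k => [|k IH] h; first by rewrite mul1r.
have := concave0_incr_le k; have := ca (ltn0Sn k).
rewrite /= -!natr1 in h IH * => cc le.
have k0 : 0 <= k%:R :> R by [].
have dS : (k%:R + 1) * (a k.+2 - a k.+1) <= (k%:R + 1) * (a k.+1 - a k).
  by rewrite ler_pM2l ?ltr_wpDl //; lra.
have ak : a k <= k%:R * (a k.+1 - a k) by lra.
have e := IH ak.
have d1 : a k.+1 - a k = a 1%N by nra.
have d2 : a k.+2 - a k.+1 = a 1%N.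
  apply/eqP; rewrite eq_le; apply/andP; split; first by lra.
  by rewrite -(@ler_pM2l _ (k%:R + 1)) ?ltr_wpDl //; lra.
lra.
Qed.

Lemma concave0_ratio_lt k : (0 < k)%N -> a k.+1 / k.+1%:R != a 1%N ->
  a k.+1 / k.+1%:R < a k / k%:R.
Proof.
move=> k0; apply: contraNT; rewrite -leNgt => le.
have {}le : a k <= k%:R * (a k.+1 - a k).
  move: le; rewrite ler_pdivrMr ?ltr0n // mulrAC ler_pdivlMr ?ltr0n // -natr1.
  lra.
by rewrite concave0_linear // mulrAC divff ?mul1r ?pnatr_eq0.
Qed.

End ConcaveSeq.

Section ModulusOfVariation.
Variables (R : realType) (nu : nat -> R) (p : R).
Hypotheses (nuM : modulus_of_variation nu) (p1 : 1 <= p).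

Let p0 : 0 < p. Proof. exact: lt_le_trans p1. Qed.
Let nu0 : nu 0%N = 0. Proof. by case: nuM. Qed.
Let nu_gt0 k : (0 < k)%N -> 0 < nu k. Proof. by case: nuM => _ + _ _; apply. Qed.
Let nu_concave : concave_seq nu. Proof. by case: nuM. Qed.

Lemma nu_ge0 k : 0 <= nu k.
Proof. by case: k => [|k]; rewrite ?nu0 // ltW ?nu_gt0. Qed.

Lemma nu_le_succ k : nu k <= nu k.+1.
Proof. by case: nuM => _ _ nuS _; case: k => [|k]; rewrite ?nu0 ?nu_ge0 ?nuS. Qed.

Let powR_nu0 : nu 0%N `^ p = 0. Proof. by rewrite nu0 powR0 ?gt_eqF. Qed.

Lemma nu_norm_ge0 k : 0 <= nu_norm p nu k.
Proof. by rewrite divr_ge0 ?nu_ge0 ?powR_ge0. Qed.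

Lemma powR_nu_norm k : (0 < k)%N -> nu_norm p nu k `^ p = nu k `^ p / k%:R.
Proof.
move=> k0; rewrite powRM ?invr_ge0 ?nu_ge0 ?powR_ge0 // -powRN -powRrM.
by rewrite mulNr mulVf ?gt_eqF // powR_inv1.
Qed.

Lemma powR_eps_p k : (0 < k)%N -> eps_p p nu k `^ p = nu k `^ p - nu k.-1 `^ p.
Proof.
case: k => // k _; rewrite powRVK // subr_ge0.
by rewrite (ler_powR2r p0) ?nnegrE ?nu_ge0 ?nu_le_succ.
Qed.

Lemma quasiconcave_powR_nu :
  quasiconcave (fun k => nu k `^ p) <-> nonincr_seq (fun k => nu k `^ p / k%:R).
Proof.
apply: quasiconcaveE => k k0; first by rewrite powR_gt0 ?nu_gt0.
by rewrite (ler_powR2r p0) ?nnegrE ?nu_ge0 ?nu_le_succ.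
Qed.

Lemma nonincr_nu_norm_quasiconcave :
  nonincr_seq (nu_norm p nu) <-> quasiconcave (fun k => nu k `^ p).
Proof.
rewrite quasiconcave_powR_nu; apply: nonincr_seq_powR p0 _ _ => k k0.
  exact: nu_norm_ge0.
exact: powR_nu_norm.
Qed.

Lemma quasiconcave_eps_p_le_nu_norm : quasiconcave (fun k => nu k `^ p) <->
  (forall k, (0 < k)%N -> eps_p p nu k <= nu_norm p nu k).
Proof.
have epsE k : (0 < k)%N -> (eps_p p nu k <= nu_norm p nu k) =
    (nu k `^ p - nu k.-1 `^ p <= nu k `^ p / k%:R).
  move=> k0; rewrite -(ler_powR2r p0) ?nnegrE ?powR_ge0 ?nu_norm_ge0 //.
  by rewrite powR_eps_p ?powR_nu_norm.
rewrite quasiconcave_powR_nu; split=> h [|k] // _.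
  rewrite epsE //; case: k => [|k] /=.
    by rewrite powR_nu0 subr0 divr1.
  by rewrite -ler_ratio_succ //; exact: h.
by have := h k.+2 isT; rewrite epsE //= -ler_ratio_succ.
Qed.

Lemma nonincr_eps_p_concave :
  nonincr_seq (eps_p p nu) <-> concave_seq (fun k => nu k `^ p).
Proof.
rewrite concave_seq_nonincr_diff; apply: nonincr_seq_powR p0 _ _ => k k0.
  exact: powR_ge0.
exact: powR_eps_p.
Qed.

Lemma nu_norm_eventually_decreasing : concave_seq (fun k => nu k `^ p) ->
  nu_norm p nu @ \oo --> 0 ->
  exists N, forall k, (N <= k)%N -> nu_norm p nu k.+1 < nu_norm p nu k.
Proof.
move=> ca nu_norm0.
have [N _ small] := cvgr_lt _ nu_norm0 _ (nu_gt0 (ltn0Sn 0)).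
exists N.+1 => -[|k] // /ltnW Nk.
rewrite -(ltr_powR2r p0) ?nnegrE ?nu_norm_ge0 // !powR_nu_norm //.
apply: (concave0_ratio_lt powR_nu0 ca) => //; rewrite -powR_nu_norm //.
rewrite lt_eqF // (ltr_powR2r p0) ?nnegrE ?nu_norm_ge0 ?nu_ge0 //.
by apply: small; rewrite /= leqW.
Qed.

Lemma diff_powR_le_powR_eps_p k : (0 < k)%N ->
  k%:R `^ (p - 1) * (nu k - nu k.-1) `^ p <= eps_p p nu k `^ p.
Proof.
case: k => // k _; rewrite powR_eps_p //=.
have d0 : 0 <= nu k.+1 - nu k by rewrite subr_ge0 nu_le_succ.
have kd : k.+1%:R * (nu k.+1 - nu k) <= nu k.+1.
  by have := concave0_incr_le nu0 nu_concave k; rewrite -natr1 mulrDl mul1r; lra.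
have -> : k.+1%:R `^ (p - 1) * (nu k.+1 - nu k) `^ p =
    (k.+1%:R * (nu k.+1 - nu k)) `^ (p - 1) * (nu k.+1 - nu k).
  by rewrite powRM // -(mulr_powRB1 d0 p0); ring.
apply: le_trans (powR_subr_ge p1 _); last by rewrite nu_ge0 nu_le_succ.
by rewrite ler_wpM2r // ge0_ler_powR ?subr_ge0 ?nnegrE ?mulr_ge0 ?nu_ge0.
Qed.

Lemma diff_le_eps_p k : (0 < k)%N ->
  nu k - nu k.-1 <= eps_p p nu k * k%:R `^ (p^-1 - 1).
Proof.
move=> k0; have d0 : 0 <= nu k - nu k.-1.
  by case: k k0 => // k _; rewrite subr_ge0 nu_le_succ.
rewrite -(ler_powR2r p0) ?nnegrE ?mulr_ge0 ?powR_ge0 //.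
rewrite powRM ?powR_ge0 // -powRrM.
have -> : (p^-1 - 1) * p = - (p - 1) by rewrite mulrBl mulVf ?gt_eqF // mul1r opprB.
rewrite powRN ler_pdivlMr ?powR_gt0 ?ltr0n // mulrC.
exact: diff_powR_le_powR_eps_p.
Qed.

End ModulusOfVariation.

Theorem lemma2p1 (R : realType) (nu : nat -> R) (p : R) :
  modulus_of_variation nu -> 1 <= p ->
  (* (i) *)
  ((nonincr_seq (nu_norm p nu) <-> quasiconcave (fun k => nu k `^ p)) /\
   (quasiconcave (fun k => nu k `^ p) <->
      (forall k : nat, (0 < k)%N -> eps_p p nu k <= nu_norm p nu k))) /\
  (* (ii) *)
  ((nonincr_seq (eps_p p nu) <-> concave_seq (fun k => nu k `^ p)) /\
   (nonincr_seq (eps_p p nu) ->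
      (nu_norm p nu @ \oo --> 0) ->
      exists N : nat, forall k : nat, (N <= k)%N ->
        nu_norm p nu k.+1 < nu_norm p nu k)) /\
  (* (iii) *)
  (exists C : R, forall k : nat, (0 < k)%N ->
     nu k - nu k.-1 <= C * eps_p p nu k * (k%:R `^ (p^-1 - 1))).
Proof.
move=> nuM p1; split; [split | split; [split |]].
- exact: nonincr_nu_norm_quasiconcave.
- exact: quasiconcave_eps_p_le_nu_norm.
- exact: nonincr_eps_p_concave.
- by move=> /(nonincr_eps_p_concave nuM p1); exact: nu_norm_eventually_decreasing.
- by exists 1 => k k0; rewrite mul1r; exact: diff_le_eps_p.
Qed.
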